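(* Assume Assumptions 1 and 2 hold and $\Delta=\{\delta:\|\delta\|_2\le\varepsilon\}$. Let $S,S'$ be datasets of size $n$ differing in only one sample $s$, and consider coupled runs of $A_{\text{Vanilla}}$ on $S$ and $S'$ with iterates $w_t,w'_t$ and $d^{(w)}_t=\|w_t-w'_t\|$. Then for every step $t$, $$\mathbb E[d^{(w)}_t]\le(1+\alpha_{w,t}\beta)\mathbb E[d^{(w)}_{t-1}]+\frac{\alpha_{w,t}\beta}{n}\Big(2\varepsilon n+\frac{2L}{\beta}\Big).$$
   Context: Loss $h(w,\delta;z)$, $w\in W$ Euclidean, $\delta\in\Delta$, Euclidean norms. Assumption 1: for every $z$, and all $w,w'\in W$, $\delta,\delta'\in\Delta$: $|h(w,\delta;z)-h(w',\delta';z)|^2\le L^2(\|w-w'\|^2+\|\delta-\delta'\|^2)$ and $|h(w,\delta;z)-h(w',\delta;z)|\le L_w\|w-w'\|$. Assumption 2: for every $z$, $h(\cdot,\cdot;z)$ is continuously differentiable and $\|\nabla_w h(w,\delta;z)-\nabla_w h(w',\delta';z)\|^2+\|\nabla_\delta h(w,\delta;z)-\nabla_\delta h(w',\delta';z)\|^2\le\beta^2(\|w-w'\|^2+\|\delta-\delta'\|^2)$. Algorithm $A_{\text{Vanilla}}$: from $w_0$, for $t=1,\dots,T$: draw a uniformly random mini-batch $B_t\subset S$ of size $b$; for each $z_j\in B_t$ pick $\delta_j\in\arg\max_{\delta\in\Delta}h(w_{t-1},\delta;z_j)$; set $w_t=w_{t-1}-\frac{\alpha_{w,t}}{b}\sum_{z_j\in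 B_t}\nabla_w h(w_{t-1},\delta_j;z_j)$. Coupling: both runs use the same initialization and the same mini-batch index sets, so the batches differ only if they contain the index of $s$, which happens with probability $b/n$. Expectation is over the mini-batch randomness. *)

From HB Require Import structures.
From mathcomp Require Import all_boot all_order all_algebra.
From mathcomp Require Import all_classical all_reals all_analysis.
Set Implicit Arguments. Unset Strict Implicit. Unset Printing Implicit Defensive.
Import Order.TTheory GRing.Theory Num.Theory.
Import numFieldNormedType.Exports.
Local Open Scope ring_scope.

Section Defs.
Variable R : realType.

Definition dotv k (u v : 'rV[R]_k) : R := \sum_(i < k) u ord0 i * v ord0 i.
Definition enorm k (u : 'rV[R]_k) : R := Num.sqrt (\sum_(i < k) u ord0 i ^+ 2).

Definition batch (n b : nat) := {B : {set 'I_n} | #|B| == b}.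

Variables (p q n b : nat) (Z : Type).
(* one SGD step of A_Vanilla at step t: data S, selector of inner maximisers *)
Definition vstep (gw : 'rV[R]_p -> 'rV[R]_q -> Z -> 'rV[R]_p)
  (sel : 'rV[R]_p -> Z -> 'rV[R]_q) (alpha : nat -> R) (S : 'I_n -> Z)
  (t : nat) (w : 'rV[R]_p) (B : batch n b) : 'rV[R]_p :=
  w - (alpha t / b%:R) *: \sum_(j in val B) gw w (sel w (S j)) (S j).

(* iterate: runF k w [:: B_{k+1}; ...; B_{k+m}] performs steps k+1,...,k+m *)
Fixpoint runF gw sel alpha S (k : nat) (w : 'rV[R]_p) (bs : seq (batch n b))
  : 'rV[R]_p :=
  match bs with
  | [::] => w
  | B :: bs' => runF gw sel alpha S k.+1 (vstep gw sel alpha S k.+1 w B) bs'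
  end.

(* expectation of a functional of t independent uniform mini-batches *)
Definition Ebatch (t : nat) (f : seq (batch n b) -> R) : R :=
  (\sum_(bs : t.-tuple (batch n b)) f (tval bs)) / #|{: t.-tuple (batch n b)}|%:R.

End Defs.

From HB Require Import structures.
From mathcomp Require Import all_boot all_order all_algebra.
From mathcomp Require Import all_classical all_reals all_analysis.
From mathcomp Require Import fingroup perm.
From mathcomp Require Import ring lra.
Import Order.TTheory GRing.Theory Num.Theory.
Import numFieldNormedType.Exports.
Local Open Scope ring_scope.

Set Implicit Arguments. Unset Strict Implicit. Unset Printing Implicit Defensive.

(* One step of the coupled runs moves the iterates apart by at most alpha_t
   times the average, over the batch, of the differences of the per-sample
   gradients.  For a sample shared by S and S', beta-smoothness and the fact
   that both inner maximisers lie in the eps-ball bound that difference by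
   beta (|w - w'| + 2 eps); for the replaced sample, L-Lipschitzness of h bounds
   each gradient by L, since the w-gradient of h is a directional derivative.
   A uniform batch contains the replaced sample with probability b/n, and
   averaging over the last batch gives the recursion. *)

Lemma ler_of_sqr_le (R : realDomainType) (x y : R) :
  0 <= y -> x ^+ 2 <= y ^+ 2 -> x <= y.
Proof. by move=> y_ge0; rewrite !expr2 => ?; nra. Qed.

Section EuclideanNorm.
Variables (R : realType) (k : nat).
Implicit Types u v : 'rV[R]_k.

Lemma enorm_ge0 u : 0 <= enorm u.
Proof. exact: sqrtr_ge0. Qed.

Lemma sqr_enorm u : enorm u ^+ 2 = \sum_(i < k) u ord0 i ^+ 2.
Proof. by rewrite sqr_sqrtr // sumr_ge0 // => i _; apply: sqr_ge0. Qed.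

Lemma dotvv u : dotv u u = enorm u ^+ 2.
Proof. by rewrite sqr_enorm; apply: eq_bigr => i _; rewrite expr2. Qed.

Lemma dotv0 u : dotv u 0 = 0.
Proof. by rewrite /dotv big1 // => i _; rewrite mxE mulr0. Qed.

(* Lagrange's argument: 2 (u_i v_i) (u_j v_j) <= u_i^2 v_j^2 + u_j^2 v_i^2. *)
Lemma CauchySchwarz_dotv u v : dotv u v ^+ 2 <= enorm u ^+ 2 * enorm v ^+ 2.
Proof.
rewrite !sqr_enorm.
have -> : dotv u v ^+ 2 =
    \sum_(i < k) \sum_(j < k) (u ord0 i * v ord0 i) * (u ord0 j * v ord0 j).
  by rewrite expr2 mulr_suml; apply: eq_bigr => i _; rewrite mulr_sumr.
have uv_ij : (\sum_i u ord0 i ^+ 2) * (\sum_i v ord0 i ^+ 2) =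
    \sum_(i < k) \sum_(j < k) u ord0 i ^+ 2 * v ord0 j ^+ 2.
  by rewrite mulr_suml; apply: eq_bigr => i _; rewrite mulr_sumr.
have uv_ji : (\sum_i u ord0 i ^+ 2) * (\sum_i v ord0 i ^+ 2) =
    \sum_(i < k) \sum_(j < k) u ord0 j ^+ 2 * v ord0 i ^+ 2.
  rewrite mulrC mulr_suml; apply: eq_bigr => i _; rewrite mulr_sumr.
  by apply: eq_bigr => j _; rewrite mulrC.
suff : 2 * (\sum_i \sum_j (u ord0 i * v ord0 i) * (u ord0 j * v ord0 j)) <=
    (\sum_i u ord0 i ^+ 2) * (\sum_i v ord0 i ^+ 2) * 2 by lra.
rewrite mulrDr mulr1 [X in X + _]uv_ij uv_ji -big_split mulr_sumr /=.
apply: ler_sum => i _; rewrite mulr_sumr -big_split; apply: ler_sum => j _ /=.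
have := sqr_ge0 (u ord0 i * v ord0 j - u ord0 j * v ord0 i); rewrite !expr2; nra.
Qed.

Lemma ler_dotv u v : dotv u v <= enorm u * enorm v.
Proof.
apply: ler_of_sqr_le; first by rewrite mulr_ge0 ?enorm_ge0.
by rewrite exprMn CauchySchwarz_dotv.
Qed.

Lemma sqr_enormD u v :
  enorm (u + v) ^+ 2 = enorm u ^+ 2 + 2 * dotv u v + enorm v ^+ 2.
Proof.
rewrite !sqr_enorm mulr_sumr -!big_split /=; apply: eq_bigr => i _.
by rewrite mxE !expr2; lra.
Qed.

Lemma ler_enormD u v : enorm (u + v) <= enorm u + enorm v.
Proof.
apply: ler_of_sqr_le; first by rewrite addr_ge0 ?enorm_ge0.
by rewrite sqr_enormD sqrrD; have := ler_dotv u v; lra.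
Qed.

Lemma enormZ (a : R) u : enorm (a *: u) = `|a| * enorm u.
Proof.
rewrite /enorm -sqrtr_sqr -sqrtrM ?sqr_ge0 // mulr_sumr.
by congr Num.sqrt; apply: eq_bigr => i _; rewrite mxE exprMn.
Qed.

Lemma enorm0 : enorm (0 : 'rV[R]_k) = 0.
Proof. by rewrite -(scale0r (0 : 'rV[R]_k)) enormZ normr0 mul0r. Qed.

Lemma enormN u : enorm (- u) = enorm u.
Proof. by rewrite -scaleN1r enormZ normrN normr1 mul1r. Qed.

Lemma ler_enormB u v : enorm (u - v) <= enorm u + enorm v.
Proof. by rewrite -(enormN v) ler_enormD. Qed.

Lemma ler_enorm_sum (I : finType) (P : pred I) (F : I -> 'rV[R]_k) :
  enorm (\sum_(i | P i) F i) <= \sum_(i | P i) enorm (F i).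
Proof.
elim/big_rec2: _ => [|i y Fy _ IH]; first by rewrite enorm0.
by apply: le_trans (ler_enormD _ _) _; rewrite lerD2l.
Qed.

End EuclideanNorm.

Lemma derive_le_of_lipschitz (R : realType) (V : normedModType R)
    (f : V -> R) (a v : V) (M : R) :
  derivable f a v -> (forall s : R, `|f (s *: v + a) - f a| <= M * `|s|) ->
  'D_v f a <= M.
Proof.
move=> df f_lip; have M_ge0 : 0 <= M.
  by have := f_lip 1; rewrite normr1 mulr1; apply: le_trans.
apply: limr_le => //; apply: nearW => s /=.
have [->|s_neq0] := eqVneq s 0; first by rewrite invr0 scale0r.
apply: le_trans (ler_norm _) _.
by rewrite normrZ normfV ler_pdivrMl ?normr_gt0 // mulrC f_lip.
Qed.

Section UniformBatches.
Variables n b : nat.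

Lemma card_batch_gt0 : (b <= n)%N -> (0 < #|{: batch n b}|)%N.
Proof.
move=> b_le_n; rewrite card_sig.
rewrite (eq_card (B := [set A : {set 'I_n} | #|A| == b])) => [|A]; last by rewrite inE.
by rewrite card_draws card_ord bin_gt0.
Qed.

Lemma card_imset_batch (s : {perm 'I_n}) (B : batch n b) : #|s @: val B| == b.
Proof. by rewrite card_imset ?(valP B) //; apply: perm_inj. Qed.

Definition batch_perm (s : {perm 'I_n}) (B : batch n b) : batch n b :=
  Sub (s @: val B) (card_imset_batch s B).

Lemma batch_perm_inj (s : {perm 'I_n}) : injective (batch_perm s).
Proof.
move=> B1 B2 /(congr1 val) /= sB12; apply: val_inj.
exact: (imset_inj (@perm_inj _ s)).
Qed.

Lemma sum_mem_batch_eq (i j : 'I_n) :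
  (\sum_(B : batch n b) (i \in val B) = \sum_(B : batch n b) (j \in val B))%N.
Proof.
rewrite [RHS](reindex_inj (batch_perm_inj (s := tperm i j))) /=.
by apply: eq_bigr => B _; rewrite -{1}(tpermL i j) mem_imset //; apply: perm_inj.
Qed.

(* Double counting of the pairs (i, B) with i in B. *)
Lemma sum_mem_batch (i : 'I_n) :
  ((\sum_(B : batch n b) (i \in val B)) * n = b * #|{: batch n b}|)%N.
Proof.
have card_B (B : batch n b) : #|val B| = (\sum_(j < n) (j \in val B))%N.
  by rewrite -sum1_card big_mkcond /=; apply: eq_bigr => j _; case: (j \in val B).
have -> : (b * #|{: batch n b}| = \sum_(B : batch n b) #|val B|)%N.
  rewrite (eq_bigr (fun _ => b)) => [|B _]; last exact/eqP/(valP B).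
  by rewrite sum_nat_const mulnC cardT.
rewrite (eq_bigr _ (fun B _ => card_B B)) exchange_big /=.
rewrite (eq_bigr _ (fun j _ => sum_mem_batch_eq j i)).
by rewrite sum_nat_const card_ord mulnC.
Qed.

End UniformBatches.

Lemma sum_tuple_rcons (T : finType) (V : nmodType) t (F : seq T -> V) :
  \sum_(s : t.+1.-tuple T) F s = \sum_(s : t.-tuple T) \sum_(x : T) F (rcons s x).
Proof.
rewrite pair_big /=.
pose f (sx : t.-tuple T * T) : t.+1.-tuple T := [tuple of rcons sx.1 sx.2].
pose g (s : t.+1.-tuple T) : t.-tuple T * T :=
  ([tuple of belast (thead s) (behead s)], last (thead s) (behead s)).
have gK : cancel g f.
  by move=> s; apply: val_inj; rewrite /= -lastI [in RHS](tuple_eta s).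
have fK : cancel f g.
  move=> [s x]; rewrite /g /f; set sx := [tuple of rcons s x].
  have : rcons s x = rcons (belast (thead sx) (behead sx)) (last (thead sx) (behead sx)).
    by rewrite -lastI -[RHS]/(val [tuple of thead sx :: behead sx]) -tuple_eta.
  by case/rcons_inj => s_eq x_eq; congr (_, _); [apply: val_inj; rewrite /= -s_eq | rewrite -x_eq].
by rewrite (reindex f) //=; exists g => sx _; [apply: fK | apply: gK].
Qed.

Section BatchExpectation.
Variables (R : realType) (n b : nat).
Local Notation N := #|{: batch n b}|.

Lemma Ebatch_rcons t (f : seq (batch n b) -> R) :
  Ebatch t.+1 f = Ebatch t (fun s => (\sum_(B : batch n b) f (rcons s B)) / N%:R).
Proof.
rewrite /Ebatch (sum_tuple_rcons t f) -mulr_suml -mulrA -invfM -natrM.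
by rewrite !card_tuple expnS.
Qed.

Lemma ler_Ebatch t (f g : seq (batch n b) -> R) :
  (forall s, size s = t -> f s <= g s) -> Ebatch t f <= Ebatch t g.
Proof.
move=> fg; rewrite /Ebatch ler_wpM2r ?invr_ge0 ?ler0n //.
by apply: ler_sum => s _; apply/fg/size_tuple.
Qed.

Lemma Ebatch_affine t (c K : R) (f : seq (batch n b) -> R) :
  (b <= n)%N -> Ebatch t (fun s => c * f s + K) = c * Ebatch t f + K.
Proof.
move=> b_le_n; have N_gt0 := card_batch_gt0 b_le_n.
rewrite /Ebatch big_split sumr_const -mulr_sumr /= mulrDl mulrA -[K *+ _]mulr_natr.
by rewrite mulfK // card_tuple pnatr_eq0 -lt0n expn_gt0 N_gt0.
Qed.

End BatchExpectation.

Lemma runF_rcons (R : realType) p q n b Z gw sel alpha (S : 'I_n -> Z) k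
    (w : 'rV[R]_p) (s : seq (batch n b)) B :
  runF (q := q) gw sel alpha S k w (rcons s B) =
  vstep gw sel alpha S (k + size s).+1 (runF gw sel alpha S k w s) B.
Proof. by elim: s k w => [|B' s IH] k w /=; rewrite ?addn0 // IH addSnnS. Qed.

Section AdversarialLoss.
Variables (R : realType) (p q : nat) (Z : Type).
Variables (h : 'rV[R]_p -> 'rV[R]_q -> Z -> R)
  (gw : 'rV[R]_p -> 'rV[R]_q -> Z -> 'rV[R]_p)
  (gd : 'rV[R]_p -> 'rV[R]_q -> Z -> 'rV[R]_q)
  (sel : 'rV[R]_p -> Z -> 'rV[R]_q) (L beta eps : R).
Hypothesis L_ge0 : 0 <= L.
Hypothesis beta_ge0 : 0 <= beta.
Hypothesis h_lipschitz : forall z w w' d d', (h w d z - h w' d' z) ^+ 2 <=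
  L ^+ 2 * (enorm (w - w') ^+ 2 + enorm (d - d') ^+ 2).
Hypothesis h_diff : forall z w d,
  differentiable (fun x : 'rV[R]_p * 'rV[R]_q => h x.1 x.2 z) (w, d).
Hypothesis h_derive : forall z w d u v,
  'D_(u, v) (fun x : 'rV[R]_p * 'rV[R]_q => h x.1 x.2 z) (w, d)
    = dotv (gw w d z) u + dotv (gd w d z) v.
Hypothesis grad_lipschitz : forall z w w' d d',
  enorm (gw w d z - gw w' d' z) ^+ 2 + enorm (gd w d z - gd w' d' z) ^+ 2 <=
  beta ^+ 2 * (enorm (w - w') ^+ 2 + enorm (d - d') ^+ 2).
Hypothesis sel_ball : forall w z, enorm (sel w z) <= eps.

Lemma h_lipschitz_w z w w' d : `|h w d z - h w' d z| <= L * enorm (w - w').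
Proof.
apply: ler_of_sqr_le; first by rewrite mulr_ge0 ?enorm_ge0.
rewrite real_normK ?num_real // (le_trans (h_lipschitz _ _ _ _ _)) //.
by rewrite subrr enorm0 expr0n addr0 exprMn.
Qed.

Lemma enorm_gw_le z w d : enorm (gw w d z) <= L.
Proof.
set g := gw w d z.
suff : enorm g ^+ 2 <= L * enorm g.
  by have := enorm_ge0 g; have := L_ge0; rewrite expr2; nra.
rewrite -dotvv -[dotv g g]addr0 -(dotv0 (gd w d z)) -h_derive.
apply: derive_le_of_lipschitz; first exact/diff_derivable/h_diff.
move=> s /=; rewrite scaler0 add0r mulrAC -mulrA -enormZ -[X in enorm X](addrK w).
exact: h_lipschitz_w.
Qed.

Lemma enorm_gw_sub_le z z' w w' d d' : enorm (gw w d z - gw w' d' z') <= 2 * L.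
Proof.
by apply: le_trans (ler_enormB _ _) _; rewrite mulr2n mulrDl mul1r lerD ?enorm_gw_le.
Qed.

Lemma enorm_sel_sub_le w w' z : enorm (sel w z - sel w' z) <= 2 * eps.
Proof.
by apply: le_trans (ler_enormB _ _) _; rewrite mulr2n mulrDl mul1r lerD.
Qed.

Lemma gw_sel_lipschitz z w w' :
  enorm (gw w (sel w z) z - gw w' (sel w' z) z) <=
  beta * (enorm (w - w') + 2 * eps).
Proof.
have dsel_ge0 := enorm_ge0 (sel w z - sel w' z).
have dsel_le := enorm_sel_sub_le w w' z.
have dw_ge0 := enorm_ge0 (w - w').
apply: ler_of_sqr_le; first by rewrite mulr_ge0 // addr_ge0 // (le_trans dsel_ge0).
rewrite exprMn; apply: le_trans (_ : _ <= beta ^+ 2 *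
    (enorm (w - w') ^+ 2 + enorm (sel w z - sel w' z) ^+ 2)) _.
  have := grad_lipschitz z w w' (sel w z) (sel w' z).
  have := sqr_ge0 (enorm (gd w (sel w z) z - gd w' (sel w' z) z)); lra.
by rewrite ler_wpM2l ?sqr_ge0 // !expr2; nra.
Qed.

Variables (n b : nat) (alpha : nat -> R) (S S' : 'I_n -> Z) (i0 : 'I_n).
Hypothesis alpha_ge0 : forall t, 0 <= alpha t.
Hypothesis b_gt0 : (0 < b)%N.
Hypothesis b_le_n : (b <= n)%N.
Hypothesis S_eq : forall i, i != i0 -> S i = S' i.

Lemma gw_sample_sub_le (j : 'I_n) w w' :
  enorm (gw w (sel w (S j)) (S j) - gw w' (sel w' (S' j)) (S' j)) <=
  beta * (enorm (w - w') + 2 * eps) + (j == i0)%:R * (2 * L).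
Proof.
have [->|j_neq] := eqVneq j i0; last first.
  by rewrite mul0r addr0 -S_eq //; apply: gw_sel_lipschitz.
rewrite mul1r (le_trans (enorm_gw_sub_le _ _ _ _ _ _)) // lerDr.
rewrite mulr_ge0 // addr_ge0 ?enorm_ge0 //.
exact: le_trans (enorm_ge0 _) (enorm_sel_sub_le w w (S i0)).
Qed.

Lemma vstep_dist_le t w w' (B : batch n b) :
  enorm (vstep gw sel alpha S t w B - vstep gw sel alpha S' t w' B) <=
  enorm (w - w') +
  alpha t * (beta * (enorm (w - w') + 2 * eps) + (i0 \in val B)%:R * (2 * L) / b%:R).
Proof.
set c := alpha t / b%:R; have c_ge0 : 0 <= c by rewrite divr_ge0.
have sum_eq_i0 : \sum_(j in val B) ((j == i0)%:R : R) = (i0 \in val B)%:R.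
  have [i0B|i0nB] := boolP (i0 \in val B).
    by rewrite (bigD1 i0) //= eqxx big1 ?addr0 // => j /andP[_ /negbTE ->].
  by rewrite big1 // => j jB; case: eqP jB => // ->; rewrite (negbTE i0nB).
have -> : alpha t * (beta * (enorm (w - w') + 2 * eps) +
    (i0 \in val B)%:R * (2 * L) / b%:R) =
    c * \sum_(j in val B) (beta * (enorm (w - w') + 2 * eps) + (j == i0)%:R * (2 * L)).
  rewrite big_split sumr_const -mulr_suml sum_eq_i0 (eqP (valP B)) /c /=.
  by field; rewrite pnatr_eq0 -lt0n.
rewrite /vstep -/c; set X := \sum_(j in val B) _; set X' := \sum_(j in val B) _.
rewrite opprD opprK addrACA (addrC (- _)) -scalerBr -[X' - X]opprB scalerN.
apply: le_trans (ler_enormB _ _) _; rewrite lerD2l enormZ ger0_norm //.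
rewrite ler_wpM2l // -sumrB; apply: le_trans (ler_enorm_sum _ _) _.
by apply: ler_sum => j _; apply: gw_sample_sub_le.
Qed.

Lemma sum_vstep_dist_le t w w' :
  \sum_(B : batch n b)
     enorm (vstep gw sel alpha S t w B - vstep gw sel alpha S' t w' B) <=
  #|{: batch n b}|%:R * ((1 + alpha t * beta) * enorm (w - w') +
    alpha t * (2 * beta * eps + 2 * L / n%:R)).
Proof.
have n_gt0 : (0 < n)%N := leq_trans b_gt0 b_le_n.
have sum_mem_i0 : \sum_(B : batch n b) ((i0 \in val B)%:R : R) =
    b%:R * #|{: batch n b}|%:R / n%:R.
  by rewrite -natr_sum -natrM -(@sum_mem_batch n b i0) natrM mulfK // pnatr_eq0 -lt0n.
apply: le_trans (ler_sum _ (fun B _ => vstep_dist_le t w w' B)) _.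
rewrite big_split sumr_const -mulr_sumr big_split sumr_const /= -!mulr_suml.
rewrite sum_mem_i0 (_ : #|xpredT| = #|{: batch n b}|) //.
rewrite -[enorm _ *+ _]mulr_natl -[beta * _ *+ _]mulr_natl le_eqVlt.
by apply/orP; left; apply/eqP; field; rewrite !pnatr_eq0 -!lt0n n_gt0 b_gt0.
Qed.

End AdversarialLoss.

Theorem lemma4 (R : realType) (p q n b : nat) (Z : Type)
  (h : 'rV[R]_p -> 'rV[R]_q -> Z -> R)
  (gw : 'rV[R]_p -> 'rV[R]_q -> Z -> 'rV[R]_p)
  (gd : 'rV[R]_p -> 'rV[R]_q -> Z -> 'rV[R]_q)
  (L Lw beta eps : R) (alpha : nat -> R)
  (sel : 'rV[R]_p -> Z -> 'rV[R]_q)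
  (Sd Sd' : 'I_n -> Z) (i0 : 'I_n) (w0 : 'rV[R]_p) :
  (* constants *)
  0 <= L -> 0 < beta -> (forall t, 0 <= alpha t) ->
  (0 < b)%N -> (b <= n)%N ->
  (* Assumption 1 *)
  (forall z w w' d d', (h w d z - h w' d' z) ^+ 2 <=
      L ^+ 2 * (enorm (w - w') ^+ 2 + enorm (d - d') ^+ 2)) ->
  (forall z w w' d, `|h w d z - h w' d z| <= Lw * enorm (w - w')) ->
  (* Assumption 2: h(.,.;z) is C^1 with gradients gw, gd, Lipschitz gradients *)
  (forall z w d, differentiable (fun x : 'rV[R]_p * 'rV[R]_q => h x.1 x.2 z) (w, d)) ->
  (forall z w d u v,
      'D_(u, v) (fun x : 'rV[R]_p * 'rV[R]_q => h x.1 x.2 z) (w, d)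
        = dotv (gw w d z) u + dotv (gd w d z) v) ->
  (forall z, continuous (fun x : 'rV[R]_p * 'rV[R]_q => (gw x.1 x.2 z, gd x.1 x.2 z))) ->
  (forall z w w' d d',
      enorm (gw w d z - gw w' d' z) ^+ 2 + enorm (gd w d z - gd w' d' z) ^+ 2 <=
      beta ^+ 2 * (enorm (w - w') ^+ 2 + enorm (d - d') ^+ 2)) ->
  (* Delta = Euclidean ball of radius eps; sel picks an inner maximiser *)
  (forall w z, enorm (sel w z) <= eps /\
     forall d, enorm d <= eps -> h w d z <= h w (sel w z) z) ->
  (* S and S' differ only in the sample at index i0 *)
  (forall i, i != i0 -> Sd i = Sd' i) ->
  forall t : nat,
    Ebatch t.+1 (fun bs : seq (batch n b) => enorm (runF gw sel alpha Sd 0 w0 bs - runF gw sel alpha Sd' 0 w0 bs))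
    <= (1 + alpha t.+1 * beta) *
         Ebatch t (fun bs : seq (batch n b) => enorm (runF gw sel alpha Sd 0 w0 bs - runF gw sel alpha Sd' 0 w0 bs))
       + (alpha t.+1 * beta / n%:R) * (2 * eps * n%:R + 2 * L / beta).
Proof.
move=> L_ge0 beta_gt0 alpha_ge0 b_gt0 b_le_n h_lip _ h_diff h_der _ grad_lip
  sel_max S_eq t.
have sel_ball w z : enorm (sel w z) <= eps by have [] := sel_max w z.
have n_gt0 : (0 < n)%N := leq_trans b_gt0 b_le_n.
have -> : alpha t.+1 * beta / n%:R * (2 * eps * n%:R + 2 * L / beta) =
    alpha t.+1 * (2 * beta * eps + 2 * L / n%:R).
  by field; rewrite pnatr_eq0 -lt0n n_gt0 gt_eqF.
rewrite Ebatch_rcons -Ebatch_affine //; apply: ler_Ebatch => s size_s.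
under eq_bigr do rewrite !runF_rcons size_s add0n.
rewrite ler_pdivrMr ?ltr0n ?card_batch_gt0 // mulrC.
exact: (sum_vstep_dist_le L_ge0 (ltW beta_gt0) h_lip h_diff h_der grad_lip
  sel_ball alpha_ge0 b_gt0 b_le_n S_eq).
Qed.
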